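(* Let $Q=A_2\otimes E_8$ and $R=\sqrt3E_8$. There exist isometric embeddings of $Q\perp R$ into $E_8^3=E_8\perp E_8\perp E_8$; in fact there are at least two kinds: (i) embeddings such that the image of $R$ is the fixed-point sublattice of an automorphism of order $3$ of $E_8^3$ which permutes the three direct summands cyclically; and (ii) embeddings such that $(\mathbb Q R)\cap E_8^3$ (the intersection of $E_8^3$ with the rational span of the image of $R$) is an orthogonal direct summand of $E_8^3$.
   Context: $A_2\otimes E_8$ is the tensor product of root lattices with product form; $\sqrt3E_8$ is the $E_8$ lattice with form scaled by 3. *)

(* Lattices are modelled concretely as Z^n (row vectors
   'rV[int]_n) equipped with an integral Gram matrix. *)
From HB Require Import structures.
From mathcomp Require Import all_boot all_order all_algebra all_fingroup.
Set Implicit Arguments. Unset Strict Implicit. Unset Printing Implicit Defensive.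
Import Order.TTheory GRing.Theory Num.Theory.
Local Open Scope ring_scope.

Definition e8_adj (i j : nat) : bool :=
  [|| (i == 0) && (j == 2), (i == 2) && (j == 0),
      (i == 1) && (j == 3), (i == 3) && (j == 1),
      (i == 2) && (j == 3), (i == 3) && (j == 2),
      (i == 3) && (j == 4), (i == 4) && (j == 3),
      (i == 4) && (j == 5), (i == 5) && (j == 4),
      (i == 5) && (j == 6), (i == 6) && (j == 5),
      (i == 6) && (j == 7) | (i == 7) && (j == 6)].

Definition e8 (i j : nat) : int :=
  if i == j then 2 else if e8_adj i j then -1 else 0.

Definition a2 (i j : nat) : int := if i == j then 2 else -1.

Definition E8gram : 'M[int]_8 := \matrix_(i, j) e8 i j.

(* Gram matrix of E8^3 = E8 _|_ E8 _|_ E8 on Z^24 (coordinate k lies in summand k %/ 8) *)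
Definition E83gram : 'M[int]_24 :=
  \matrix_(i, j) (if (i %/ 8 == j %/ 8)%N then e8 (i %% 8) (j %% 8) else 0).

(* Gram matrix of Q _|_ R on Z^24: coordinates 0..15 span Q = A2 (x) E8
   (basis e_a (x) f_i, index 8a+i, Gram = a2 a b * e8 i j), coordinates
   16..23 span R = sqrt3 E8 (Gram = 3 * e8). *)
Definition QRgram : 'M[int]_24 :=
  \matrix_(i, j)
    (if ((i < 16) && (j < 16))%N then a2 (i %/ 8) (j %/ 8) * e8 (i %% 8) (j %% 8)
     else if ((16 <= i) && (16 <= j))%N then 3 * e8 (i - 16) (j - 16)
     else 0).

Definition bE83 (x y : 'rV[int]_24) : int := (x *m E83gram *m y^T) 0 0.

(* An isometric embedding of Q _|_ R into E8^3: the i-th row of M is the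
   image of the i-th basis vector of Q _|_ R (x |-> x *m M). *)
Definition isom_embedding (M : 'M[int]_24) : Prop :=
  M *m E83gram *m M^T = QRgram /\ (forall c : 'rV[int]_24, c *m M = 0 -> c = 0).

Definition R_coords {T : nmodType} (c : 'rV[T]_24) : Prop :=
  forall k : 'I_24, (k < 16)%N -> c 0 k = 0.

Definition imR (M : 'M[int]_24) (x : 'rV[int]_24) : Prop :=
  exists c : 'rV[int]_24, R_coords c /\ x = c *m M.

Definition satR (M : 'M[int]_24) (x : 'rV[int]_24) : Prop :=
  exists c : 'rV[rat]_24, R_coords c /\
    map_mx (fun z : int => z%:~R : rat) x = c *m map_mx (fun z : int => z%:~R : rat) M.

Definition aut_E83 (g : 'M[int]_24) : Prop :=
  g \in unitmx /\ g *m E83gram *m g^T = E83gram.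

Definition in_summand (i : 'I_3) (x : 'rV[int]_24) : Prop :=
  forall k : 'I_24, (k %/ 8 != i)%N -> x 0 k = 0.

Definition permutes_summands_cyclically (g : 'M[int]_24) : Prop :=
  exists s : 'S_3, s != 1%g /\ (s ^+ 3)%g = 1%g /\
    forall (i : 'I_3) (x : 'rV[int]_24), in_summand i x <-> in_summand (s i) (x *m g).

Definition orth_direct_summand (S : 'rV[int]_24 -> Prop) : Prop :=
  forall x : 'rV[int]_24, exists s t, S s /\ x = s + t /\ (forall y, S y -> bE83 t y = 0).

From mathcomp Require Import all_boot all_order all_algebra all_fingroup.
From mathcomp Require Import zify.
Set Implicit Arguments. Unset Strict Implicit. Unset Printing Implicit Defensive.
Import Order.TTheory GRing.Theory Num.Theory.
Local Open Scope ring_scope.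

(* Write Q = A2 (x) E8 with A2 = {(a, b, c) in Z^3 | a + b + c = 0}.
   (i) Tensoring with E8, Q sits in E8^3 as {(u, v, w) | u + v + w = 0} and
   R = sqrt3 E8 as the diagonal {(v, v, v)}: the two are orthogonal, and the
   diagonal is exactly the fixed lattice of the cyclic shift of the summands.
   (ii) Let w be an automorphism of E8 of order 3 without fixed vectors, so
   that w^2 + w + 1 = 0 and E8 becomes a lattice over the Eisenstein integers.
   Sending e_0 (x) f to (0, f, f) and e_1 (x) f to (0, w f, -(1 + w) f) embeds
   Q into the last two summands, and t = 1 + 2 w (a square root of -3) scales
   the form by 3, so f |-> (t f, 0, 0) embeds R into the first summand.  As t
   is invertible over Q, the rational span of R meets E8^3 in the first
   summand.  Injectivity of both embeddings follows from the Gram identity,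
   since 3 times the inverse of the Gram matrix of Q _|_ R is integral. *)

Section MatrixOfFun.
Variable R : pzRingType.

Definition mx_of_fun m n (f : nat -> nat -> R) : 'M[R]_(m, n) := \matrix_(i, j) f i j.

Definition iota_sum n (F : nat -> R) : R := foldr (fun k acc => F k + acc) 0 (iota 0 n).

Lemma sum_ord_iota n (F : nat -> R) : \sum_(k < n) F k = iota_sum n F.
Proof.
rewrite -(big_mkord xpredT F) /index_iota subn0 /iota_sum.
by elim: (iota 0 n) => [|a s IHs]; rewrite ?big_nil // big_cons IHs.
Qed.

Lemma mul_mx_of_fun m n p (f g : nat -> nat -> R) :
  mx_of_fun m n f *m mx_of_fun n p g
  = mx_of_fun m p (fun i j => iota_sum n (fun k => f i k * g k j)).
Proof.
apply/matrixP => i j; rewrite !mxE -sum_ord_iota.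
by apply: eq_bigr => k _; rewrite !mxE.
Qed.

Lemma tr_mx_of_fun m n (f : nat -> nat -> R) :
  (mx_of_fun m n f)^T = mx_of_fun n m (fun i j => f j i).
Proof. by apply/matrixP => i j; rewrite !mxE. Qed.

Lemma scalar_mx_of_fun n (a : R) : a%:M = mx_of_fun n n (fun i j => a *+ (i == j)).
Proof. by apply/matrixP => i j; rewrite !mxE. Qed.

Lemma scale_mx_of_fun m n a (f : nat -> nat -> R) :
  a *: mx_of_fun m n f = mx_of_fun m n (fun i j => a * f i j).
Proof. by apply/matrixP => i j; rewrite !mxE. Qed.

Lemma mx_of_fun_eq m n (f g : nat -> nat -> R) :
  all (fun i => all (fun j => f i j == g i j) (iota 0 n)) (iota 0 m) ->
  mx_of_fun m n f = mx_of_fun m n g.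
Proof.
move=> /allP fg; apply/matrixP => i j; rewrite !mxE; apply/eqP.
have /fg/allP fgi : (i : nat) \in iota 0 m by rewrite mem_iota add0n ltn_ord.
by apply: fgi; rewrite mem_iota add0n ltn_ord.
Qed.

Lemma mx_of_fun_eq0 m n (f : nat -> nat -> R) (P : nat -> nat -> bool) :
  all (fun i => all (fun j => P i j ==> (f i j == 0)) (iota 0 n)) (iota 0 m) ->
  forall (i : 'I_m) (j : 'I_n), P i j -> mx_of_fun m n f i j = 0.
Proof.
move=> /allP f0 i j Pij; rewrite mxE; apply/eqP.
have /f0/allP f0i : (i : nat) \in iota 0 m by rewrite mem_iota add0n ltn_ord.
have /f0i : (j : nat) \in iota 0 n by rewrite mem_iota add0n ltn_ord.
by rewrite Pij.
Qed.

Definition monomial_fun (h : nat -> nat) (a : nat -> R) (l k : nat) : R :=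
  if l == h k then a k else 0.

Lemma mul_monomial n (x : 'rV[R]_n.+1) (h : nat -> nat) (a : nat -> R) (k : 'I_n.+1) :
  (h k < n.+1)%N ->
  (x *m mx_of_fun n.+1 n.+1 (monomial_fun h a)) 0 k = x 0 (inord (h k)) * a k.
Proof.
move=> hk; rewrite mxE (bigD1 (inord (h k))) //= mxE /monomial_fun inordK // eqxx.
rewrite big1 ?addr0 // => l lk; rewrite mxE /monomial_fun.
by case: eqP => [lE|_]; [rewrite -lE inord_val eqxx in lk | rewrite mulr0].
Qed.

End MatrixOfFun.

Ltac mx_compute := apply: mx_of_fun_eq; vm_compute; reflexivity.

Lemma mulmx_scalar_inj (R : idomainType) m n (M : 'M[R]_(m, n)) (N : 'M[R]_(n, m)) a :
  a != 0 -> M *m N = a%:M -> forall c : 'rV_m, c *m M = 0 -> c = 0.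
Proof.
move=> a0 MN c cM0; apply/eqP.
have : a *: c == 0 by rewrite -mul_mx_scalar -MN mulmxA cM0 mul0mx.
by rewrite scalemx_eq0 (negbTE a0).
Qed.

Lemma gram_inj (R : idomainType) m n (M : 'M[R]_(m, n)) (B : 'M_n) (H H' : 'M_m) a :
  a != 0 -> M *m B *m M^T = H -> H *m H' = a%:M ->
  forall c : 'rV_m, c *m M = 0 -> c = 0.
Proof.
move=> a0 MBM HH'; apply: (mulmx_scalar_inj a0 (N := B *m M^T *m H')).
by rewrite !mulmxA MBM.
Qed.

Definition table (L : seq (seq int)) (i j : nat) : int := nth 0 (nth [::] L i) j.

Definition E8gram_inv : seq (seq int) :=
  [:: [::  4;  5;  7; 10;  8;  6;  4; 2];
      [::  5;  8; 10; 15; 12;  9;  6; 3];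
      [::  7; 10; 14; 20; 16; 12;  8; 4];
      [:: 10; 15; 20; 30; 24; 18; 12; 6];
      [::  8; 12; 16; 24; 20; 15; 10; 5];
      [::  6;  9; 12; 18; 15; 12;  8; 4];
      [::  4;  6;  8; 12; 10;  8;  6; 3];
      [::  2;  3;  4;  6;  5;  4;  3; 2]].

(* An automorphism w of E8 of order 3 without fixed vectors:
   w E8 w^T = E8 and w^2 + w + 1 = 0. *)
Definition E8_omega : seq (seq int) :=
  [:: [:: -1; -1; -1; -2; -1; -1; -1;  0];
      [:: -1; -2; -2; -3; -2; -2; -1; -1];
      [:: -1; -1; -2; -2; -2; -1; -1; -1];
      [::  1;  1;  1;  1;  1;  1;  1;  1];
      [::  0;  0;  1;  1;  0;  0;  0;  0];
      [::  0;  1;  0;  1;  1;  0;  0;  0];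
      [::  1;  0;  1;  1;  1;  1;  0;  0];
      [::  0;  1;  1;  1;  1;  1;  1;  0]].

Definition eis_fun (a b : int) (i j : nat) : int :=
  a * (i == j)%:R + b * table E8_omega i j.

Definition blockfun (B : seq (seq (nat -> nat -> int))) (i j : nat) : int :=
  nth (fun _ _ => 0) (nth [::] B (i %/ 8)%N) (j %/ 8)%N (i %% 8)%N (j %% 8)%N.

Definition E83_fun (i j : nat) : int :=
  if (i %/ 8 == j %/ 8)%N then e8 (i %% 8) (j %% 8) else 0.
Definition QR_fun (i j : nat) : int :=
  if ((i < 16) && (j < 16))%N then a2 (i %/ 8) (j %/ 8) * e8 (i %% 8) (j %% 8)
  else if ((16 <= i) && (16 <= j))%N then 3 * e8 (i - 16) (j - 16)
  else 0.

Lemma E83gramE : E83gram = mx_of_fun 24 24 E83_fun. Proof. by []. Qed.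
Lemma QRgramE : QRgram = mx_of_fun 24 24 QR_fun. Proof. by []. Qed.

Definition QRdual : 'M[int]_24 :=
  let E' i j := table E8gram_inv i j in
  mx_of_fun 24 24 (blockfun [:: [:: fun i j => 2 * E' i j; E'; fun _ _ => 0];
                                 [:: E'; fun i j => 2 * E' i j; fun _ _ => 0];
                                 [:: fun _ _ => 0; fun _ _ => 0; E']]).

Lemma QRgram_dual : QRgram *m QRdual = 3%:M.
Proof. by rewrite QRgramE scalar_mx_of_fun mul_mx_of_fun; mx_compute. Qed.

Definition emb_cyclic : 'M[int]_24 :=
  mx_of_fun 24 24 (blockfun [:: [:: eis_fun 1 0; eis_fun (-1) 0; eis_fun 0 0];
                                [:: eis_fun 0 0; eis_fun 1 0; eis_fun (-1) 0];
                                [:: eis_fun 1 0; eis_fun 1 0; eis_fun 1 0]]).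
Definition emb_summand : 'M[int]_24 :=
  mx_of_fun 24 24 (blockfun [:: [:: eis_fun 0 0; eis_fun 1 0; eis_fun 1 0];
                                [:: eis_fun 0 0; eis_fun 0 1; eis_fun (-1) (-1)];
                                [:: eis_fun 1 2; eis_fun 0 0; eis_fun 0 0]]).

Lemma emb_cyclic_gram : emb_cyclic *m E83gram *m emb_cyclic^T = QRgram.
Proof. by rewrite E83gramE QRgramE tr_mx_of_fun !mul_mx_of_fun; mx_compute. Qed.
Lemma emb_summand_gram : emb_summand *m E83gram *m emb_summand^T = QRgram.
Proof. by rewrite E83gramE QRgramE tr_mx_of_fun !mul_mx_of_fun; mx_compute. Qed.

Lemma isom_embedding_of_gram (M : 'M[int]_24) :
  M *m E83gram *m M^T = QRgram -> isom_embedding M.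
Proof. by move=> gramM; split=> //; apply: (gram_inj _ gramM QRgram_dual). Qed.

Definition shift_index (k : nat) : nat := ((k + 16) %% 24)%N.
Definition cyclic_shift : 'M[int]_24 :=
  mx_of_fun 24 24 (monomial_fun shift_index (fun _ => 1)).

Lemma cyclic_shift_gram : cyclic_shift *m E83gram *m cyclic_shift^T = E83gram.
Proof. by rewrite E83gramE tr_mx_of_fun !mul_mx_of_fun; mx_compute. Qed.

Lemma cyclic_shift_cube : cyclic_shift *m (cyclic_shift *m cyclic_shift) = 1%:M.
Proof. by rewrite scalar_mx_of_fun !mul_mx_of_fun; mx_compute. Qed.

Lemma mulmx_cyclic_shift (x : 'rV[int]_24) (k : 'I_24) :
  (x *m cyclic_shift) 0 k = x 0 (inord (shift_index k)).
Proof. by rewrite mul_monomial ?mulr1 // ltn_mod. Qed.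

Lemma cyclic_shift_neq1 : cyclic_shift != 1.
Proof. by apply/eqP => /matrixP/(_ 0 0); rewrite !mxE. Qed.

Definition cycle3 : {perm 'I_3} := perm (@ordS_inj 3).

Lemma cycle3E i : cycle3 i = ordS i.
Proof. by rewrite permE. Qed.

Lemma cycle3_neq1 : cycle3 != 1%g.
Proof. by apply/eqP => /permP/(_ ord0); rewrite cycle3E perm1. Qed.

Lemma cycle3_order : (cycle3 ^+ 3)%g = 1%g.
Proof.
apply/permP => i; rewrite permX perm1 /= !cycle3E; apply: val_inj.
by case: i => [[|[|[|i]]] Hi].
Qed.

Lemma cyclic_shift_permutes_summands : permutes_summands_cyclically cyclic_shift.
Proof.
exists cycle3; split; [exact: cycle3_neq1 | split; first exact: cycle3_order].
move=> i x; rewrite cycle3E; split => [x_i k Hk | Gx_i k Hk].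
- rewrite mulmx_cyclic_shift; apply: x_i; rewrite inordK /shift_index ?ltn_mod //.
  by move: Hk; have := ltn_ord k; have := ltn_ord i; rewrite /=; lia.
- have /Gx_i : ((inord ((k + 8) %% 24) : 'I_24) %/ 8 != ordS i)%N.
    rewrite inordK ?ltn_mod //=.
    by move: Hk; have := ltn_ord k; have := ltn_ord i; lia.
  rewrite mulmx_cyclic_shift; congr (x 0 _ = 0); apply: val_inj.
  by rewrite /shift_index /= !inordK ?ltn_mod //; have := ltn_ord k; lia.
Qed.

Definition projR : 'M[int]_24 :=
  mx_of_fun 24 24 (monomial_fun id (fun k => (16 <= k)%N%:R)).
Definition liftR : 'M[int]_24 :=
  mx_of_fun 24 24 (monomial_fun (fun k => k - 16)%N (fun k => (16 <= k)%N%:R)).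
Definition fold8 : 'M[int]_24 :=
  mx_of_fun 24 24 (monomial_fun (fun k => k %% 8)%N (fun _ => 1)).

Lemma projR_emb_cyclic_shift :
  projR *m emb_cyclic *m cyclic_shift = projR *m emb_cyclic.
Proof. by rewrite !mul_mx_of_fun; mx_compute. Qed.

Lemma liftR_emb_cyclic : liftR *m emb_cyclic = fold8.
Proof. by rewrite mul_mx_of_fun; mx_compute. Qed.

Lemma R_coords_projR (c : 'rV[int]_24) : R_coords c -> c *m projR = c.
Proof.
move=> Rc; apply/rowP => k; rewrite mul_monomial // inord_val.
by case: (ltnP k 16) => [k16|_]; [rewrite (Rc k k16) mul0r | rewrite mulr1].
Qed.

Lemma R_coords_liftR (x : 'rV[int]_24) : R_coords (x *m liftR).
Proof.
move=> k k16; rewrite mul_monomial; last by rewrite (leq_ltn_trans (leq_subr _ _)).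
by rewrite leqNgt k16 mulr0.
Qed.

Lemma cyclic_shift_fixed_periodic (x : 'rV[int]_24) :
  x *m cyclic_shift = x -> forall k : 'I_24, x 0 k = x 0 (inord (k %% 8)).
Proof.
move=> Gx; have back (k : 'I_24) : (8 <= k)%N -> x 0 k = x 0 (inord (k - 8)).
  move=> k8; rewrite -[in LHS]Gx mulmx_cyclic_shift /shift_index.
  by congr (x 0 (inord _)); have := ltn_ord k; lia.
move=> k; have k24 := ltn_ord k.
case: (ltnP k 8) => [k8 | k8]; first by rewrite modn_small // inord_val.
rewrite back //; case: (ltnP k 16) => k16; first by congr (x 0 (inord _)); lia.
by rewrite back ?inordK; first congr (x 0 (inord _)); lia.
Qed.

Lemma imR_emb_cyclic (x : 'rV[int]_24) : imR emb_cyclic x <-> x *m cyclic_shift = x.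
Proof.
split=> [[c [Rc ->]] | Gx].
  by rewrite -(R_coords_projR Rc) -!mulmxA (mulmxA projR) projR_emb_cyclic_shift.
exists (x *m liftR); split; first exact: R_coords_liftR.
rewrite -mulmxA liftR_emb_cyclic; apply/rowP => k.
rewrite mul_monomial ?mulr1 -?cyclic_shift_fixed_periodic //.
by rewrite (ltn_trans (ltn_pmod _ _)).
Qed.

Definition proj0 : 'M[int]_24 :=
  mx_of_fun 24 24 (monomial_fun id (fun k => (k < 8)%N%:R)).
(* x |-> (0, 0, t x_0) with t = 1 + 2 w; since t^2 = -3 it is mapped by
   emb_summand to -3 times the first component of x. *)
Definition theta_lift : 'M[int]_24 :=
  mx_of_fun 24 24 (blockfun [:: [:: eis_fun 0 0; eis_fun 0 0; eis_fun 1 2]]).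

Lemma theta_lift_emb_summand : theta_lift *m emb_summand = (-3) *: proj0.
Proof. by rewrite scale_mx_of_fun mul_mx_of_fun; mx_compute. Qed.

Lemma emb_summand_R_rows (k l : 'I_24) :
  (16 <= k)%N -> (8 <= l)%N -> emb_summand k l = 0.
Proof.
move=> k16 l8; apply: (mx_of_fun_eq0 (P := fun k l => (16 <= k) && (8 <= l))%N).
  by vm_compute.
by rewrite k16 l8.
Qed.

Lemma theta_lift_R_cols (l k : 'I_24) : (k < 16)%N -> theta_lift l k = 0.
Proof.
by move=> k16; apply: (mx_of_fun_eq0 (P := fun _ k => k < 16)%N) => //; vm_compute.
Qed.

Lemma satR_emb_summand_proj0 (x : 'rV[int]_24) : satR emb_summand (x *m proj0).
Proof.
exists ((-3)^-1 *: map_mx (fun z : int => z%:~R : rat) (x *m theta_lift)); split.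
  move=> k k16; rewrite !mxE big1 ?mulr0 // => l _.
  by rewrite theta_lift_R_cols // mulr0.
rewrite -scalemxAl -map_mxM -mulmxA theta_lift_emb_summand -scalemxAr.
by rewrite map_mxZ scalerA mulVf ?scale1r.
Qed.

Lemma satR_emb_summand_supp (y : 'rV[int]_24) (l : 'I_24) :
  satR emb_summand y -> (8 <= l)%N -> y 0 l = 0.
Proof.
move=> [c [Rc yE]] l8; move/rowP/(_ l): yE; rewrite !mxE big1.
  by move/eqP; rewrite intr_eq0 => /eqP.
move=> k _; case: (ltnP k 16) => [k16|k16]; first by rewrite Rc // mul0r.
by rewrite mxE emb_summand_R_rows // mulr0.
Qed.

Lemma emb_summand_orth_summand : orth_direct_summand (satR emb_summand).
Proof.
move=> x; exists (x *m proj0), (x - x *m proj0).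
split; first exact: satR_emb_summand_proj0.
split; first by rewrite addrC subrK.
move=> y Ry; rewrite /bE83 mxE big1 // => a _; rewrite !mxE.
case: (ltnP a 8) => a8; last by rewrite (satR_emb_summand_supp Ry) // mulr0.
rewrite big1 ?mul0r // => b _; rewrite !mxE.
case: (ltnP b 8) => b8.
  have -> : \sum_j x 0 j * proj0 j b = (x *m proj0) 0 b by rewrite mxE.
  by rewrite mul_monomial // inord_val b8 mulr1 subrr mul0r.
by rewrite ifN ?mulr0 //; have := ltn_ord b; lia.
Qed.

Theorem lemma6p1 :
  (exists M : 'M[int]_24, isom_embedding M /\
     exists g : 'M[int]_24, aut_E83 g /\ g ^+ 3 = 1 /\ g != 1 /\
       permutes_summands_cyclically g /\
       (forall x : 'rV[int]_24, imR M x <-> x *m g = x))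
  /\
  (exists M : 'M[int]_24, isom_embedding M /\ orth_direct_summand (satR M)).
Proof.
split.
  exists emb_cyclic; split; first exact: isom_embedding_of_gram emb_cyclic_gram.
  exists cyclic_shift; split.
    by split; [case: (mulmx1_unit cyclic_shift_cube) | exact: cyclic_shift_gram].
  split; first by rewrite !exprS expr0 mulr1; exact: cyclic_shift_cube.
  split; first exact: cyclic_shift_neq1.
  by split; [exact: cyclic_shift_permutes_summands | exact: imR_emb_cyclic].
exists emb_summand; split; first exact: isom_embedding_of_gram emb_summand_gram.
exact: emb_summand_orth_summand.
Qed.
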